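(* Fix $\bar x\ge0$ and let $Y=(Y_t)_{t\ge0}$ be a measurable real-valued path with $Y_0\le\bar x$ such that $\overline Y$ (its running supremum with initial maximum level $\bar x$) is continuous. Let $H=(H_t)_{t\ge0}$ be a measurable path with $H_t\le1$ for all $t\ge0$ (and such that the integrals below are well defined). Define $U_t=Y_t-\int_{0^+}^tH_s\,\mathrm d\overline Y_s$. Then the running supremum of $U$ with initial maximum level $\bar x$ satisfies $$\overline U_t=\overline Y_t-\int_{0^+}^tH_s\,\mathrm d\overline Y_s,\qquad t\ge0.$$
   Context: For a path $Y$ and $\bar x\ge Y_0$, $\overline Y_t:=\bar x\vee\sup_{0\le s\le t}Y_s$. $\int_{0^+}^t$ denotes the Stieltjes integral over $(0,t]$. *)

From HB Require Import structures.
From mathcomp Require Import all_boot all_order all_algebra.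
From mathcomp Require Import all_classical all_reals all_analysis.
Set Implicit Arguments. Unset Strict Implicit. Unset Printing Implicit Defensive.
Import Order.TTheory GRing.Theory Num.Theory.
Import numFieldNormedType.Exports.
Local Open Scope classical_set_scope.
Local Open Scope ring_scope.

Definition runmax (R : realType) (xbar : R) (Y : R -> R) (t : R) : \bar R :=
  maxe xbar%:E (ereal_sup [set (Y s)%:E | s in `[0, t]%classic]).

(* Lebesgue-Stieltjes measure dF of a function F : R -> R; it is the library's
   [lebesgue_stieltjes_measure] when F is nondecreasing and right-continuous
   (the only case in which it is used), and the zero measure otherwise. *)
Definition stieltjes_measure (R : realType) (F : R -> R)
  : set (measurableTypeR R) -> \bar R :=
  match pselect (nondecreasing F /\ (forall x : R, F%function @ at_right x --> F x)) with
  | left P => lebesgue_stieltjes_measure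
      (HB.pack_for (cumulative R R) F
         (isCumulative.Build R _ R F (proj1 P) (proj2 P)))
  | right _ => @mzero _ (measurableTypeR R) R
  end.

Definition stieltjes_int (R : realType) (F H : R -> R) (t : R) : \bar R :=
  (\int[stieltjes_measure F]_(s in `]0%R, t]%classic) (H s)%:E)%E.

From HB Require Import structures.
From mathcomp Require Import all_boot all_order all_algebra.
From mathcomp Require Import all_classical all_reals all_analysis.
From mathcomp Require Import lra.
Import Order.TTheory GRing.Theory Num.Theory.
Import numFieldNormedType.Exports.
Local Open Scope classical_set_scope.
Local Open Scope ring_scope.

(* Write F for the running maximum and I for the integral of H against dF.
   Since H <= 1, the increments of I are dominated by those of F, so F - I
   is nondecreasing and U = Y - I, hence also its running maximum, stays
   below it.  Conversely, when F has just increased, Y is close to F,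
   and absolute continuity of the integral makes I nearly constant while F
   does not move, so U comes close to F - I at some earlier time. *)

Lemma Rintegral_normr_continuous {d : measure_display} {T : measurableType d}
    {R : realType} (mu : {measure set T -> \bar R}) {D : set T} {f : T -> R} :
    measurable D -> mu.-integrable D (EFin \o f) ->
  forall e, 0 < e -> exists2 r, 0 < r &
    forall A, measurable A -> A `<=` D -> (mu A < r%:E)%E ->
      `|\int[mu]_(x in A) f x| < e.
Proof.
move=> mD intf e e0.
have intfD : mu.-integrable setT (EFin \o f \_ D).
  move: intf; rewrite (integrable_mkcond _ mD); apply: eq_integrable => //= x _.
  by rewrite !patchE; case: ifP.
have [r [r0 hr]] := integral_normr_continuous intfD e0.
exists r => // A mA AD muA.
have intfA : mu.-integrable A (EFin \o f) by exact: integrableS intf.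
apply: le_lt_trans (le_normr_Rintegral mA intfA) _.
rewrite (eq_Rintegral mu (g := fun x => `|(f \_ D) x|)); first exact: hr.
by move=> x /set_mem /AD xD; rewrite patchE mem_set.
Qed.

Section Rintegral_ocitv.
Context {R : realType} {mu : {measure set (measurableTypeR R) -> \bar R}}.
Context {F H : R -> R} {t : R}.
Hypothesis mu_ocitv : forall a b, a <= b -> mu `]a, b]%classic = (F b - F a)%:E.
Hypothesis H_le1 : forall s, 0 < s <= t -> H s <= 1.
Hypothesis H_int : mu.-integrable `]0, t]%classic (EFin \o H).

Local Notation I a b := (\int[mu]_(x in `]a, b]%classic) H x).

Lemma integrable_subocitv a b : 0 <= a -> b <= t ->
  mu.-integrable `]a, b]%classic (EFin \o H).
Proof.
move=> a0 bt; apply: integrableS H_int => // x /=; rewrite !in_itv/=.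
by move=> /andP[ax xb]; rewrite (le_lt_trans a0 ax) (le_trans xb bt).
Qed.

Lemma Rintegral_ocitv_split s : 0 <= s <= t -> I 0 t = I 0 s + I s t.
Proof.
move=> /andP[s0 st].
rewrite -Rintegral_setU //; last 2 first.
- by rewrite -itv_bndbnd_setU ?bnd_simp.
- apply/eqP/seteqP; split => x //=; rewrite !in_itv/=.
  by move=> [/andP[_ xs] /andP[sx _]]; move: (lt_le_trans sx xs); rewrite ltxx.
by rewrite -itv_bndbnd_setU ?bnd_simp.
Qed.

Lemma Rintegral_ocitv_le s : 0 <= s <= t -> I s t <= F t - F s.
Proof.
move=> /andP[s0 st]; rewrite -[F t - F s]mul1r -[F t - F s]/(fine (F t - F s)%:E).
rewrite -mu_ocitv // -Rintegral_cst //.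
apply: le_Rintegral => //; first exact: integrable_subocitv.
  apply/integrableP; split; first exact: measurable_cst.
  rewrite (eq_integral (fun _ => 1%E)); last by move=> x _ /=; rewrite normr1.
  by rewrite integral_cst // mul1e mu_ocitv // ltry.
move=> x /=; rewrite in_itv/= => /andP[sx xt]; apply: H_le1.
by rewrite xt (le_lt_trans s0 sx).
Qed.

Lemma Rintegral_ocitv_ge e : 0 < e -> exists2 r, 0 < r &
  forall s, 0 <= s <= t -> F t - F s < r -> - e <= I s t.
Proof.
move=> e0; have [r r0 hr] := Rintegral_normr_continuous mu (measurable_itv _) H_int _ e0.
exists r => // s /andP[s0 st] Fst.
have : `|I s t| < e.
  apply: hr; first exact: measurable_itv.
    move=> x /=; rewrite !in_itv/= => /andP[sx ->].
    by rewrite (le_lt_trans s0 sx).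
  by rewrite mu_ocitv // lte_fin.
by rewrite ltr_norml => /andP[/ltW].
Qed.

End Rintegral_ocitv.

Section runmax.
Context {R : realType} (xbar : R) (Y : R -> R).

Lemma runmax_ge_init t : (xbar%:E <= runmax xbar Y t)%E.
Proof. by rewrite /runmax le_max lexx. Qed.

Lemma runmax_ge s t : 0 <= s <= t -> ((Y s)%:E <= runmax xbar Y t)%E.
Proof.
move=> st; rewrite /runmax le_max; apply/orP; right.
by apply: ereal_sup_ubound; exists s => //=; rewrite in_itv.
Qed.

Lemma runmax_le t (M : \bar R) : (xbar%:E <= M)%E ->
  (forall s, 0 <= s <= t -> ((Y s)%:E <= M)%E) -> (runmax xbar Y t <= M)%E.
Proof.
move=> xM YM; rewrite /runmax ge_max xM /=.
by apply: ge_ereal_sup => _ [s /= + <-]; rewrite in_itv => /YM.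
Qed.

Lemma le_runmax : {homo runmax xbar Y : a b / a <= b >-> (a <= b)%E}.
Proof.
move=> a b ab; apply: runmax_le; first exact: runmax_ge_init.
by move=> s /andP[s0 sa]; apply: runmax_ge; rewrite s0 (le_trans sa ab).
Qed.

Lemma runmax_lt0 t : t < 0 -> runmax xbar Y t = xbar%:E.
Proof.
move=> t0; apply/eqP; rewrite eq_le runmax_ge_init andbT.
apply: runmax_le => // s /andP[s0 st]; move: (le_lt_trans (le_trans s0 st) t0).
by rewrite ltxx.
Qed.

Lemma runmax0 : Y 0 <= xbar -> runmax xbar Y 0 = xbar%:E.
Proof.
move=> Y0; apply/eqP; rewrite eq_le runmax_ge_init andbT.
apply: runmax_le => // s; rewrite -eq_le => /eqP <-.
by rewrite lee_fin.
Qed.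

End runmax.

Section runmax_sub_Rintegral.
Context (R : realType) (mu : {measure set (measurableTypeR R) -> \bar R}).
Variables (xbar t : R) (Y F H : R -> R).
Hypothesis t0 : 0 <= t.
Hypothesis runmaxE : forall s, 0 <= s -> runmax xbar Y s = (F s)%:E.
Hypothesis F0 : F 0 = xbar.
Hypothesis mu_ocitv : forall a b, a <= b -> mu `]a, b]%classic = (F b - F a)%:E.
Hypothesis H_le1 : forall s, 0 < s <= t -> H s <= 1.
Hypothesis H_int : mu.-integrable `]0, t]%classic (EFin \o H).

Local Notation I a b := (\int[mu]_(x in `]a, b]) H x).
Let U s := Y s - I 0 s.

Let Y_le_F s : 0 <= s -> Y s <= F s.
Proof.
by move=> s0; rewrite -lee_fin -runmaxE // runmax_ge // s0 lexx.
Qed.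

Let t0' : (0 : R) <= 0 <= t. Proof. by rewrite lexx t0. Qed.

Lemma runmax_sub_Rintegral_le : (runmax xbar U t <= (F t - I 0 t)%:E)%E.
Proof.
apply: runmax_le => [|s st]; rewrite lee_fin.
  by have := Rintegral_ocitv_le mu_ocitv H_le1 H_int _ t0'; rewrite F0; lra.
have /andP[/Y_le_F YF _] := st.
have := Rintegral_ocitv_le mu_ocitv H_le1 H_int _ st.
by have := Rintegral_ocitv_split H_int _ st; rewrite /U; lra.
Qed.

(* Either Y comes within m of F t at some s <= t, and then U s is nearly
   F t - I 0 t, or the running maximum of Y never exceeded xbar, and then
   F t = F 0 makes I 0 t nearly nonnegative. *)
Lemma runmax_sub_Rintegral_ge : ((F t - I 0 t)%:E <= runmax xbar U t)%E.
Proof.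
apply/lee_addgt0Pr => e e0.
have e20 : 0 < e / 2 by rewrite divr_gt0.
have [r r0 hr] := Rintegral_ocitv_ge mu_ocitv H_int _ e20.
pose m := Num.min r (e / 2).
have m0 : 0 < m by rewrite lt_min r0 e20.
have [mr me] : m <= r /\ m <= e / 2 by rewrite !ge_min !lexx orbT.
have [[s /and3P[s0 st YFt]]|noYs] :=
  pselect (exists s, [&& 0 <= s, s <= t & F t - m < Y s]).
  have sI : 0 <= s <= t by rewrite s0.
  have YF := Y_le_F s s0; have Is := hr s sI.
  apply: le_trans (leeD2r _ (runmax_ge xbar U _ _ sI)); rewrite -EFinD lee_fin.
  by have := Rintegral_ocitv_split H_int _ sI; rewrite /U; lra.
have Ft : F t = xbar.
  have : ((F t)%:E <= maxe xbar%:E (F t - m)%:E)%E.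
    rewrite -runmaxE //; apply: runmax_le => [|s /andP[s0 st]].
      by rewrite le_max lexx.
    rewrite le_max; apply/orP; right; rewrite lee_fin leNgt; apply/negP => YFt.
    by apply: noYs; exists s; rewrite s0 st YFt.
  rewrite le_max !lee_fin => /orP[Fx|]; last by lra.
  by apply/eqP; rewrite eq_le Fx -F0 -lee_fin -!runmaxE // le_runmax.
have := hr 0 t0'; rewrite Ft F0 subrr => /(_ r0) I0.
apply: le_trans (leeD2r _ (runmax_ge_init xbar U t)); rewrite -EFinD lee_fin; lra.
Qed.

Lemma runmax_sub_Rintegral : runmax xbar U t = (F t - I 0 t)%:E.
Proof.
by apply/eqP; rewrite eq_le runmax_sub_Rintegral_le runmax_sub_Rintegral_ge.
Qed.

End runmax_sub_Rintegral.

Lemma stieltjes_measure_ocitv {R : realType} {F : R -> R} :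
  nondecreasing F -> (forall x, F @ at_right x --> F x) ->
  exists2 mu : {measure set (measurableTypeR R) -> \bar R},
    stieltjes_measure F = mu &
    forall a b, a <= b -> mu `]a, b]%classic = (F b - F a)%:E.
Proof.
move=> ndF rcF; rewrite /stieltjes_measure; case: pselect => [P|[]//].
eexists; first reflexivity.
move=> a b ab; rewrite /= /lebesgue_stieltjes_measure /measure_extension.
rewrite measurable_mu_extE //; last exact: is_ocitv.
exact: wlength_itv_bnd.
Qed.

Lemma continuous_at_right_of_ge0 {R : realType} {f : R -> R} {c : R} :
  {within `[0, +oo[, continuous f} -> (forall x, x < 0 -> f x = c) ->
  forall x, f @ at_right x --> f x.
Proof.
move=> /continuous_within_itvcyP[fcont f0] fneg x.
have [x0|x0] := ltP x 0.
  rewrite fneg //; apply: cvg_near_cst.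
  by apply: filterS (nbhs_right_lt x0) => y /fneg.
have [->//|xn0] := eqVneq x 0.
apply: cvg_at_right_filter; apply: fcont.
by rewrite in_itv /= andbT lt_neqAle eq_sym xn0.
Qed.

Theorem lemma3p1 (R : realType) (xbar : R) (Y H : R -> R) :
  0 <= xbar ->
  measurable_fun (`[0, +oo[%classic : set R) Y ->
  Y 0 <= xbar ->
  (forall t, 0 <= t -> runmax xbar Y t \is a fin_num) ->
  {within `[0, +oo[%classic, continuous (fun t => fine (runmax xbar Y t))} ->
  measurable_fun (`[0, +oo[%classic : set R) H ->
  (forall t, 0 <= t -> H t <= 1) ->
  (forall t, 0 <= t ->
     (stieltjes_measure (fun s => fine (runmax xbar Y s))).-integrable
       `]0, t]%classic (fun s => (H s)%:E)) ->
  let Ybar := fun t => fine (runmax xbar Y t) in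
  let U := fun t => Y t - fine (stieltjes_int Ybar H t) in
  forall t, 0 <= t ->
    runmax xbar U t = ((Ybar t)%:E - stieltjes_int Ybar H t)%E.
Proof.
move=> _ _ Y0 Yfin Ycont _ H_le1 H_int Ybar U t t0.
have Ybar_lt0 s : s < 0 -> Ybar s = xbar by move=> s0; rewrite /Ybar runmax_lt0.
have runmax_fin s : runmax xbar Y s \is a fin_num.
  by have [s0|s0] := ltP s 0; [rewrite runmax_lt0 | exact: Yfin].
have Ybar_nd : nondecreasing Ybar by move=> a b ab; apply: fine_le; rewrite ?le_runmax.
have [mu Emu mu_ocitv] := stieltjes_measure_ocitv Ybar_nd
  (continuous_at_right_of_ge0 Ycont Ybar_lt0).
have H_int_t := H_int t t0; rewrite -/Ybar Emu in H_int_t.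
rewrite /U /stieltjes_int Emu -[X in (_ - X)%E]fineK ?integrable_fin_num //.
rewrite -EFinB; apply: runmax_sub_Rintegral => //.
- by move=> s s0; rewrite /Ybar fineK.
- by rewrite /Ybar runmax0.
- by move=> s /andP[s0 _]; rewrite H_le1 // ltW.
Qed.
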